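(* Let $\Omega>0$, let $V_0,V_1$ be column indices of $X\in\mathbb{R}^{K\times d}$ with $X[i,V_0],X[i,V_1]\in[-\Omega,\Omega]$ for all $i\in[K]$, let $C$ be a column index with $X[i,C]\in\{0,1\}$ for all $i\in[K]$, and let $E$ be a target column index. Then there exists a single transformer layer that simulates the selection operation: for every $i\in[K]$, it writes $X[i,V_1]$ into entry $(i,E)$ if $X[i,C]=1$, and writes $X[i,V_0]$ into entry $(i,E)$ otherwise.
   Context: Conventions: rows/columns indexed from $1$; $X[i,j]$ is the $(i,j)$ entry. $\phi(x)=\max\{x,0\}$ entrywise. Hardmax $\sigma$: row $i$ of $\sigma(\Phi)$ is $\frac{1}{|S_i|}\sum_{k\in S_i}e_k$, $S_i=\{k:\Phi_{ik}=\max_j\Phi_{ij}\}$. For a weighted hypergraph with incident matrix $A\in\mathbb{R}^{n_v\times n_e}$ ($A_{ij}=w(e_j)$ if vertex $v_i$ lies in hyperedge $e_j$, else $0$) and $K\ge\max\{n_v,n_e\}+1$, the padded incident matrix $\widetilde A\in\mathbb{R}^{K\times K}$ has $\widetilde A_{i+1,j+1}=A_{ij}$ and zeros elsewhere. A transformer layer acting on $X\in\mathbb{R}^{K\times d}$ is $f(X,\widetilde A)=f_{\mathrm{mlp}}(f_{\mathrm{attn}}(X,\widetilde A))$, where $f_{\mathrm{attn}}(X,\widetilde A)=\sum_{i\in M_A}\psi^{(i)}(X,\widetilde A)+\sum_{i\in M_{A^\top}}\psi^{(i)}(X,\widetilde A^\top)+\sum_{i\in M}\psi^{(i)}(X,I_K)+X$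 with heads $\psi(X,B)=B\,\sigma(XW_QW_K^\top X^\top)XW_V$ ($W_Q,W_K\in\mathbb{R}^{d\times2}$, $W_V\in\mathbb{R}^{d\times d}$), and $f_{\mathrm{mlp}}(X)=Z^{(4)}W^{(4)}+X$ with $Z^{(1)}=X$, $Z^{(j+1)}=\phi(Z^{(j)}W^{(j)})$ for $j=1,2,3$, $W^{(j)}\in\mathbb{R}^{d\times d}$. Storage convention: scalars are stored in the top row of a column (other entries $0$), arrays of length $K-1$ in rows $2,\dots,K$ (top entry $0$); $X$ contains designated columns $B_{\mathrm{global}}$ (top entry $1$, others $0$), $B_{\mathrm{local}}$ (top entry $0$, others $1$), and may contain scratchpad columns. ''Simulating an operation'' means the layer's weights can be chosen so that applying the layer to $X$ performs the stated update. *)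

From mathcomp Require Import all_boot all_order all_algebra.
Set Implicit Arguments. Unset Strict Implicit. Unset Printing Implicit Defensive.
Import Order.TTheory GRing.Theory Num.Theory.
Local Open Scope ring_scope.

Section Transformer.
Variable R : realFieldType.

Definition relu_mx m n (Z : 'M[R]_(m, n)) : 'M[R]_(m, n) :=
  map_mx (fun x => Num.max x 0) Z.

Definition rowmax K (Phi : 'M[R]_K) (i : 'I_K) : R :=
  \big[Num.max/Phi i i]_(j < K) Phi i j.

Definition argmax_set K (Phi : 'M[R]_K) (i : 'I_K) : {set 'I_K} :=
  [set k | Phi i k == rowmax Phi i].

Definition hardmax K (Phi : 'M[R]_K) : 'M[R]_K :=
  \matrix_(i, k) ((k \in argmax_set Phi i)%:R / (#|argmax_set Phi i|)%:R).

Record head (d : nat) := Head {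
  WQ : 'M[R]_(d, 2);
  WK : 'M[R]_(d, 2);
  WV : 'M[R]_(d, d) }.

Definition psi K d (h : head d) (X : 'M[R]_(K, d)) (B : 'M[R]_K) : 'M[R]_(K, d) :=
  B *m hardmax (X *m WQ h *m (WK h)^T *m X^T) *m X *m WV h.

Record layer (d : nat) := Layer {
  headsA  : seq (head d);
  headsAT : seq (head d);
  headsI  : seq (head d);
  W1 : 'M[R]_d; W2 : 'M[R]_d; W3 : 'M[R]_d; W4 : 'M[R]_d }.

Definition f_attn K d (L : layer d) (X : 'M[R]_(K, d)) (At : 'M[R]_K) : 'M[R]_(K, d) :=
  \sum_(h <- headsA L) psi h X At
  + \sum_(h <- headsAT L) psi h X At^T
  + \sum_(h <- headsI L) psi h X 1%:M
  + X.

Definition f_mlp K d (L : layer d) (X : 'M[R]_(K, d)) : 'M[R]_(K, d) :=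
  let Z2 := relu_mx (X *m W1 L) in
  let Z3 := relu_mx (Z2 *m W2 L) in
  let Z4 := relu_mx (Z3 *m W3 L) in
  Z4 *m W4 L + X.

Definition apply_layer K d (L : layer d) (X : 'M[R]_(K, d)) (At : 'M[R]_K) : 'M[R]_(K, d) :=
  f_mlp L (f_attn L X At).

(* incidence matrix of a weighted hypergraph with n_v vertices and n_e
   hyperedges: inc i j says vertex v_i lies in hyperedge e_j, w j = w(e_j) *)
Definition incidence nv ne (inc : 'I_nv -> 'I_ne -> bool) (w : 'I_ne -> R)
  : 'M[R]_(nv, ne) := \matrix_(i, j) (if inc i j then w j else 0).

(* padded incidence matrix: Atilde_{i+1,j+1} = A_{ij} (1-indexed), 0 elsewhere;
   in 0-indexed ordinals: Atilde i j = A (i-1) (j-1) for 1 <= i <= nv, 1 <= j <= ne *)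
Definition padded K nv ne (A : 'M[R]_(nv, ne)) : 'M[R]_K :=
  \matrix_(i, j)
    match (insub (i.-1) : option 'I_nv), (insub (j.-1) : option 'I_ne) with
    | Some i', Some j' => if (0 < i)%N && (0 < j)%N then A i' j' else 0
    | _, _ => 0
    end.

(* designated columns: B_global has top entry 1 and all others 0;
   B_local has top entry 0 and all others 1 (top row = row 1 = index 0) *)
Definition is_Bglobal K d (X : 'M[R]_(K, d)) (c : 'I_d) : Prop :=
  forall i : 'I_K, X i c = (nat_of_ord i == 0)%N%:R.
Definition is_Blocal K d (X : 'M[R]_(K, d)) (c : 'I_d) : Prop :=
  forall i : 'I_K, X i c = (nat_of_ord i != 0)%N%:R.

End Transformer.

(* A single ReLU MLP with no attention heads suffices.  With the constant 1
   available as [B_global + B_local], the hidden unit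
   [relu (X[V1] - X[V0] + 4 Ω X[C] - 2 Ω)] is [0] when [X[C] = 0] and
   [X[V1] - X[V0] + 2 Ω] when [X[C] = 1], because [|X[V1] - X[V0]| <= 2 Ω].
   Two more units [relu y] and [relu (-y)] pass [y = X[V0] - 2 Ω X[C] - X[E]]
   through linearly; adding all three to the residual [X[E]] yields the
   selected value.  The hidden layers have
   width [d], so this needs [d >= 3].  When [d <= 2] the columns [B_global]
   and [B_local] are all the columns, so every row of [X] is a standard basis
   vector and a linear update does the job. *)
From mathcomp Require Import all_boot all_order all_algebra.
From mathcomp Require Import lra zify.

Set Implicit Arguments.
Unset Strict Implicit.
Unset Printing Implicit Defensive.

Import Order.TTheory GRing.Theory Num.Theory.
Local Open Scope ring_scope.

Section ReLU.
Variable R : realFieldType.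

Lemma relu_mx_ge0 m n (Z : 'M[R]_(m, n)) i j : 0 <= relu_mx Z i j.
Proof. by rewrite mxE le_max lexx orbT. Qed.

Lemma relu_mxE m n (Z : 'M[R]_(m, n)) i j : relu_mx Z i j = Num.max (Z i j) 0.
Proof. exact: mxE. Qed.

Lemma relu_mx_id m n (Z : 'M[R]_(m, n)) :
  (forall i j, 0 <= Z i j) -> relu_mx Z = Z.
Proof. by move=> Z_ge0; apply/matrixP => i j; rewrite mxE; apply/max_idPl. Qed.

Lemma relu_subN (x : R) : Num.max x 0 - Num.max (- x) 0 = x.
Proof.
have [x_ge0 | x_lt0] := leP 0 x.
  have -> : Num.max (- x) 0 = 0 by apply/max_idPr; rewrite oppr_le0.
  by rewrite subr0.
have -> : Num.max (- x) 0 = - x by apply/max_idPl; rewrite oppr_ge0 ltW.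
by rewrite sub0r opprK.
Qed.

Lemma relu_select (Omega v0 v1 c : R) :
    - Omega <= v0 <= Omega -> - Omega <= v1 <= Omega -> c = 0 \/ c = 1 ->
  Num.max (v1 - v0 + 4 * Omega * c - 2 * Omega) 0 + (v0 - 2 * Omega * c)
    = if c == 1 then v1 else v0.
Proof.
move=> /andP[v0_lb v0_ub] /andP[v1_lb v1_ub] [] ->; rewrite ?eqxx.
  have -> : Num.max (v1 - v0 + 4 * Omega * 0 - 2 * Omega) 0 = 0.
    by apply/max_idPr; lra.
  by rewrite eq_sym oner_eq0; lra.
have -> : Num.max (v1 - v0 + 4 * Omega * 1 - 2 * Omega) 0
            = v1 - v0 + 4 * Omega * 1 - 2 * Omega by apply/max_idPl; lra.
lra.
Qed.

End ReLU.

Section MlpLayer.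
Variables (R : realFieldType) (d : nat).

Definition mlp_layer (A : 'M[R]_d) (u : 'cV[R]_d) (E : 'I_d) : layer R d :=
  Layer [::] [::] [::] A 1%:M 1%:M (u *m delta_mx 0 E).

Lemma apply_mlp_layerE A u E K (X : 'M[R]_(K, d)) At i j :
  apply_layer (mlp_layer A u E) X At i j
    = X i j + (j == E)%:R * (relu_mx (X *m A) *m u) i 0.
Proof.
rewrite /apply_layer /f_attn /f_mlp /= !big_nil !add0r !mulmx1.
rewrite !(relu_mx_id (relu_mx_ge0 _)) mulmxA addrC mxE.
by rewrite [(_ *m _) i j]mxE big_ord1 [delta_mx _ _ _ _]mxE eqxx mulrC.
Qed.

Definition neuron_mx (w : 'I_d -> 'cV[R]_d) : 'M[R]_d :=
  \matrix_(k, n) w n k 0.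

Lemma mul_neuron_mxE K (X : 'M[R]_(K, d)) w i n :
  (X *m neuron_mx w) i n = (X *m w n) i 0.
Proof. by rewrite !mxE; apply: eq_bigr => k _; rewrite mxE. Qed.

End MlpLayer.

Section WideSelect.
Variables (R : realFieldType) (d : nat) (Omega : R).
Variables (V0 V1 C E Bg Bl : 'I_d.+3).

Let e (k : 'I_d.+3) : 'cV[R]_d.+3 := delta_mx k 0.
Let n0 : 'I_d.+3 := Ordinal (isT : (0 < d.+3)%N).
Let n1 : 'I_d.+3 := Ordinal (isT : (1 < d.+3)%N).
Let n2 : 'I_d.+3 := Ordinal (isT : (2 < d.+3)%N).

Definition gate_weights : 'cV[R]_d.+3 :=
  e V1 - e V0 + (4 * Omega) *: e C - (2 * Omega) *: (e Bg + e Bl).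

Definition pass_weights : 'cV[R]_d.+3 := e V0 - (2 * Omega) *: e C - e E.

Definition select_neurons (n : 'I_d.+3) : 'cV[R]_d.+3 :=
  if n == n0 then gate_weights
  else if n == n1 then pass_weights
  else if n == n2 then - pass_weights
  else 0.

Definition select_layer : layer R d.+3 :=
  mlp_layer (neuron_mx select_neurons) (e n0 + e n1 - e n2) E.

Lemma select_layerE K (X : 'M[R]_(K, d.+3)) At :
    (forall i, X i Bg + X i Bl = 1) ->
    (forall i, - Omega <= X i V0 <= Omega) ->
    (forall i, - Omega <= X i V1 <= Omega) ->
    (forall i, X i C = 0 \/ X i C = 1) ->
  forall i j, apply_layer select_layer X At i j =
    (if j == E then (if X i C == 1 then X i V1 else X i V0) else X i j).
Proof.
move=> unit_bias V0_bd V1_bd C01 i j.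
rewrite apply_mlp_layerE; case: eqP => [-> | _]; last by rewrite mul0r addr0.
set Z := relu_mx _; have ZE k : Z i k = Num.max (_ i k) 0 := relu_mxE _ i k.
clearbody Z; rewrite mul1r mulmxBr mulmxDr -!colE !mxE !ZE.
rewrite !mul_neuron_mxE /select_neurons /= mulmxN [(- _ : 'cV__) i 0]mxE.
rewrite -addrA relu_subN.
rewrite !(mulmxDr, mulmxN) -!scalemxAr !mulmxDr -!colE !mxE.
rewrite unit_bias mulr1 -(relu_select (V0_bd i) (V1_bd i) (C01 i)).
lra.
Qed.

End WideSelect.

Section BasisSelect.
Variables (R : realFieldType) (d : nat) (V0 V1 C E : 'I_d).

Definition basis_update : 'cV[R]_d :=
  \col_k ((if C == k then (V1 == k)%:R else (V0 == k)%:R) - (E == k)%:R).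

Definition basis_select_layer : layer R d := mlp_layer 1%:M basis_update E.

Lemma basis_select_layerE K (X : 'M[R]_(K, d)) At (t : 'I_K -> 'I_d) :
    (forall i, row i X = delta_mx 0 (t i)) ->
  forall i j, apply_layer basis_select_layer X At i j =
    (if j == E then (if X i C == 1 then X i V1 else X i V0) else X i j).
Proof.
move=> X_basis i j.
have XE i' k : X i' k = (k == t i')%:R.
  by move: (X_basis i') => /rowP/(_ k); rewrite !mxE.
rewrite apply_mlp_layerE mulmx1 relu_mx_id => [|i' k]; last by rewrite XE.
case: eqP => [-> | _]; last by rewrite mul0r addr0.
rewrite mul1r mxE (bigD1 (t i)) //= big1 => [|k /negPf nk]; last first.
  by rewrite XE nk mul0r.
rewrite !XE eqxx mul1r addr0 mxE addrC subrK.
by rewrite pnatr_eq1; case: (C == t i).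
Qed.

End BasisSelect.

Lemma ord_le2_cover d (a b k : 'I_d) : (d <= 2)%N -> a != b -> k = a \/ k = b.
Proof.
move=> d_le2 a_neq_b; have [-> | k_neq_a] := eqVneq k a; [by left | right].
apply/val_inj; move: a_neq_b k_neq_a; rewrite -!val_eqE /=.
have := ltn_ord a; have := ltn_ord b; have := ltn_ord k; lia.
Qed.

Lemma Bglobal_Blocal_neq (R : realFieldType) K d (X : 'M[R]_(K, d)) Bg Bl
    (i : 'I_K) :
  is_Bglobal X Bg -> is_Blocal X Bl -> Bg != Bl.
Proof.
move=> X_Bg X_Bl; apply/eqP => Bg_Bl; move: (X_Bg i) (X_Bl i).
by rewrite Bg_Bl => ->; case: eqP => _ /eqP; rewrite ?oner_eq0 // eq_sym oner_eq0.
Qed.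

Lemma Bglobal_Blocal_rowE (R : realFieldType) K d (X : 'M[R]_(K, d)) Bg Bl :
    (d <= 2)%N -> is_Bglobal X Bg -> is_Blocal X Bl ->
  forall i, row i X = delta_mx 0 (if (i == 0 :> nat) then Bg else Bl).
Proof.
move=> d_le2 X_Bg X_Bl i; have Bg_neq_Bl := Bglobal_Blocal_neq i X_Bg X_Bl.
apply/rowP => k; rewrite !mxE /=.
case: (ord_le2_cover k d_le2 Bg_neq_Bl) => ->; rewrite ?X_Bg ?X_Bl.
  by case: (i == 0 :> nat); rewrite ?eqxx // (negPf Bg_neq_Bl).
by case: (i == 0 :> nat); rewrite ?eqxx // eq_sym (negPf Bg_neq_Bl).
Qed.

Theorem lemmaC1 (R : realFieldType) (d : nat) (Omega : R)
    (V0 V1 C E Bg Bl : 'I_d) :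
  0 < Omega ->
  exists L : layer R d,
  forall (K : nat) (X : 'M[R]_(K, d)),
    is_Bglobal X Bg -> is_Blocal X Bl ->
    (forall i : 'I_K, - Omega <= X i V0 <= Omega) ->
    (forall i : 'I_K, - Omega <= X i V1 <= Omega) ->
    (forall i : 'I_K, X i C = 0 \/ X i C = 1) ->
    forall (nv ne : nat) (inc : 'I_nv -> 'I_ne -> bool) (w : 'I_ne -> R),
    (maxn nv ne < K)%N ->
    forall (i : 'I_K) (j : 'I_d),
      apply_layer L X (padded K (incidence inc w)) i j =
      (if j == E then (if X i C == 1 then X i V1 else X i V0) else X i j).
Proof.
move=> _; case: d V0 V1 C E Bg Bl => [|[|[|d]]] V0 V1 C E Bg Bl.
- by case: V0.
1-2: exists (basis_select_layer R V0 V1 C E) => K X X_Bg X_Bl _ _ _ nv ne inc w _.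
1-2: exact/basis_select_layerE/(Bglobal_Blocal_rowE _ X_Bg X_Bl).
exists (select_layer Omega V0 V1 C E Bg Bl) => K X X_Bg X_Bl V0_bd V1_bd C01.
move=> nv ne inc w _; apply: select_layerE => // i.
by rewrite X_Bg X_Bl; case: (i == 0 :> nat); rewrite ?addr0 ?add0r.
Qed.
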